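(* Let $P\subset\mathbb{R}^d$ be a finite dataset with $|P|=n$, let $s$ be the number of compute nodes, $t<s$, $\delta>0$, and let $A\in\{0,1\}^{s\times n}$ (columns indexed by the points of $P$) satisfy the straggler-resilience property with parameter $\delta$. For $i\in[s]$ let $P_i$ be the set of points of $P$ whose column has a $1$ in row $i$. Let $\mathcal{R}\subseteq[s]$ with $|\mathcal{R}|\ge s-t$ be the set of non-straggling nodes and $\mathbf{b}=(b_i)_{i\in\mathcal{R}}$ a corresponding non-negative recovery vector. For each $i\in\mathcal{R}$ let $Y_i$ be an optimal set of $k$ $k$-median centers for $P_i$, with weights $w_i(\mathbf{c})=|\mathrm{cluster}(\mathbf{c},P_i)|$ for $\mathbf{c}\in Y_i$. Let $Y=\bigcup_{i\in\mathcal{R}}Y_i$ with weight $w(\mathbf{c})=\sum_{i\in\mathcal{R}:\,\mathbf{c}\in Y_i}b_i w_i(\mathbf{c})$, and let $\widehat{C}$ be an optimal set of $k$ centers for the weighted $k$-median problem on $(Y,w)$. If $C^*$ is an optimal set of $k$-median centers for $P$, then $$\mathrm{cost}(P,\widehat{C})\le 3(1+\delta)\,\mathrm{cost}(P,C^* ).$$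
   Context: $d(\mathbf{x},C)=\min_{\mathbf{c}\in C}\|\mathbf{x}-\mathbf{c}\|_2$. The $k$-median cost is $\mathrm{cost}(Q,C)=\sum_{\mathbf{q}\in Q}d(\mathbf{q},C)$ and the weighted version is $\mathrm{cost}(Q,C,w)=\sum_{\mathbf{q}\in Q}w(\mathbf{q})d(\mathbf{q},C)$; optimal centers are minimizers over all sets of $k$ points in $\mathbb{R}^d$. $\mathrm{cluster}(\mathbf{c},P_i)$ is the set of points of $P_i$ whose closest center in $Y_i$ is $\mathbf{c}$ (ties broken arbitrarily so clusters partition $P_i$). Straggler-resilience property with parameter $\delta$: for every $\mathcal{R}\subseteq[s]$ with $|\mathcal{R}|\ge s-t$, letting $A_{\mathcal{R}}$ be the rows of $A$ indexed by $\mathcal{R}$, there is $\mathbf{b}\in\mathbb{R}^{|\mathcal{R}|}$ with non-negative entries (a recovery vector) such that $\mathbf{b}^TA_{\mathcal{R}}=(a_1,\ldots,a_n)$ with $1\le a_j\le1+\delta$ for all $j$. *)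

From mathcomp Require Import all_boot all_order all_algebra.
Set Implicit Arguments. Unset Strict Implicit. Unset Printing Implicit Defensive.
Import Order.TTheory GRing.Theory Num.Theory.
Local Open Scope ring_scope.

Section KMedian.
Variables (R : rcfType) (d : nat).
Notation pt := 'rV[R]_d.

Definition enorm (x : pt) : R := Num.sqrt (\sum_(i < d) (x ord0 i) ^+ 2).

(* d(x, C) = min_{c in C} ||x - c||_2, for a (nonempty) list of centers C.
   (The start value is a member of C when C is nonempty.) *)
Definition dist (x : pt) (C : seq pt) : R :=
  \big[Num.min/enorm (x - head 0 C)]_(c <- C) enorm (x - c).

Definition cost (n : nat) (p : 'I_n -> pt) (Q : {set 'I_n}) (C : seq pt) : R :=
  \sum_(j in Q) dist (p j) C.

(* weighted cost  cost(Y, C, w) = sum_{q in Y} w(q) d(q, C),  Y a duplicate-free list *)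
Definition wcost (Y : seq pt) (w : pt -> R) (C : seq pt) : R :=
  \sum_(q <- Y) w q * dist q C.

Definition opt_kmedian (k n : nat) (p : 'I_n -> pt) (Q : {set 'I_n}) (C : k.-tuple pt) :=
  forall C' : k.-tuple pt, cost p Q C <= cost p Q C'.

Definition opt_wkmedian (k : nat) (Y : seq pt) (w : pt -> R) (C : k.-tuple pt) :=
  forall C' : k.-tuple pt, wcost Y w C <= wcost Y w C'.

End KMedian.

(* Recovery vector for the set of surviving nodes Rs (b is only read on Rs):
   non-negative entries with  b^T A_Rs = (a_1..a_n),  1 <= a_j <= 1 + delta. *)
Definition recovery_vector (R : realFieldType) (s n : nat) (A : 'M[R]_(s, n))
    (delta : R) (Rs : {set 'I_s}) (b : 'I_s -> R) :=
  (forall i, i \in Rs -> 0 <= b i) /\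
  (forall j : 'I_n, 1 <= \sum_(i in Rs) b i * A i j <= 1 + delta).

Definition straggler_resilient (R : realFieldType) (s n t : nat) (A : 'M[R]_(s, n))
    (delta : R) :=
  forall Rs : {set 'I_s}, (s - t <= #|Rs|)%N ->
    exists b : 'I_s -> R, recovery_vector A delta Rs b.

Definition Pset (R : ringType) (s n : nat) (A : 'M[R]_(s, n)) (i : 'I_s) : {set 'I_n} :=
  [set j | A i j == 1].

(* Let G(C) = sum_{i in R} b_i cost(P_i, C), let y_ij be the center of Y_i serving the
   point j of P_i, and H = sum_i b_i cost(P_i, Y_i).  Since every entry a_j of b^T A_R
   lies in [1, 1 + delta], cost(P, C) <= G(C) <= (1 + delta) cost(P, C).  The weighted
   cost of the coreset (Y, w) is D(C) = sum_i b_i sum_{j in P_i} d(y_ij, C), and the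
   1-Lipschitz bound d(x, C) <= |x - y| + d(y, C) gives G(C) <= H + D(C) and
   D(C) <= H + G(C); moreover H <= G(C) by optimality of the Y_i.  Hence
     cost(P, Chat) <= G(Chat) <= H + D(Chat) <= H + D(Cstar) <= 2H + G(Cstar) <= 3 G(Cstar),
   which is at most 3 (1 + delta) cost(P, Cstar). *)

From mathcomp Require Import all_boot all_order all_algebra.
From mathcomp Require Import ring lra.
Set Implicit Arguments. Unset Strict Implicit. Unset Printing Implicit Defensive.
Import Order.TTheory GRing.Theory Num.Theory.
Local Open Scope ring_scope.

Lemma cauchy_schwarz (R : realFieldType) (I : finType) (a b : I -> R) :
  (\sum_i a i * b i) ^+ 2 <= (\sum_i a i ^+ 2) * (\sum_i b i ^+ 2).
Proof.
set X := (\sum_i a i ^+ 2) * _; set Z := (\sum_i a i * b i) ^+ 2.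
have lagrange : \sum_i \sum_j (a i * b j - a j * b i) ^+ 2 = X + X - 2%:R * Z.
  have XE : X = \sum_i \sum_j a j ^+ 2 * b i ^+ 2.
    by rewrite /X big_distrlr exchange_big.
  rewrite {2}XE /X /Z expr2 !big_distrlr mulr_sumr -!big_split -sumrB /=.
  apply: eq_bigr => i _; rewrite mulr_sumr -!big_split -sumrB /=.
  by apply: eq_bigr => j _; ring.
have : 0 <= X + X - 2%:R * Z.
  by rewrite -lagrange; do 2!apply: sumr_ge0 => ? _; apply: sqr_ge0.
lra.
Qed.

Section EuclideanDistance.
Variables (R : rcfType) (d : nat).
Implicit Types (x y z : 'rV[R]_d) (C : seq 'rV[R]_d).

Lemma enorm_ge0 x : 0 <= enorm x.
Proof. exact: sqrtr_ge0. Qed.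

Lemma enormD x y : enorm (x + y) <= enorm x + enorm y.
Proof.
rewrite /enorm; set sx := \sum_i x ord0 i ^+ 2; set sy := \sum_i y ord0 i ^+ 2.
have sx_ge0 : 0 <= sx by apply: sumr_ge0 => i _; apply: sqr_ge0.
have sy_ge0 : 0 <= sy by apply: sumr_ge0 => i _; apply: sqr_ge0.
have sxyE : \sum_i (x + y) ord0 i ^+ 2 =
    sx + sy + 2%:R * \sum_i x ord0 i * y ord0 i.
  rewrite mulr_sumr -!big_split /=; apply: eq_bigr => i _; rewrite mxE; ring.
have cs : \sum_i x ord0 i * y ord0 i <= Num.sqrt sx * Num.sqrt sy.
  rewrite -sqrtrM // (le_trans (ler_norm _)) // -sqrtr_sqr.
  exact/ler_wsqrtr/cauchy_schwarz.
rewrite sxyE -[leRHS]ger0_norm ?addr_ge0 ?sqrtr_ge0 // -sqrtr_sqr.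
by apply: ler_wsqrtr; rewrite sqrrD !sqr_sqrtr //; lra.
Qed.

Lemma enormN x : enorm (- x) = enorm x.
Proof. by congr Num.sqrt; apply: eq_bigr => i _; rewrite mxE sqrrN. Qed.

Lemma enormB x y : enorm (x - y) = enorm (y - x).
Proof. by rewrite -enormN opprB. Qed.

Lemma enorm_triangle x y z : enorm (x - z) <= enorm (x - y) + enorm (y - z).
Proof.
by rewrite [leLHS](_ : _ = enorm ((x - y) + (y - z))) ?enormD // addrA subrK.
Qed.

Lemma dist_ge0 x C : 0 <= dist x C.
Proof. by apply: le_bigmin => *; apply: enorm_ge0. Qed.

Lemma dist_lipschitz x y C : dist x C <= enorm (x - y) + dist y C.
Proof.
rewrite -lerBlDl [leRHS]big_seq; apply: le_bigmin => [|c cC]; rewrite lerBlDl.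
  by apply: le_trans (enorm_triangle x y _); apply: bigmin_le_id.
by apply: le_trans (enorm_triangle x y c); apply: ge_bigmin_seq.
Qed.

End EuclideanDistance.

Lemma sum_Pset (R : nzRingType) (s n : nat) (A : 'M[R]_(s, n)) (i : 'I_s)
    (f : 'I_n -> R) :
  (forall i j, A i j = 0 \/ A i j = 1) ->
  \sum_(j in Pset A i) f j = \sum_j A i j * f j.
Proof.
move=> A01; rewrite big_mkcond; apply: eq_bigr => j _; rewrite inE.
by case: (A01 i j) => ->; rewrite ?eqxx ?mul0r ?mul1r // eq_sym oner_eq0.
Qed.

Lemma sum_fibers (R : nzSemiRingType) (T : eqType) (I : finType) (Q : {pred I})
    (g : I -> T) (f : T -> R) (Y : seq T) :
  uniq Y -> {in Q, forall j, g j \in Y} ->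
  \sum_(c <- Y) #|[set j in Q | g j == c]|%:R * f c = \sum_(j in Q) f (g j).
Proof.
move=> Y_uniq gY.
have fiberE j : j \in Q -> f (g j) = \sum_(c <- Y) (if g j == c then f c else 0).
  move=> Qj; rewrite -big_mkcond -big_filter.
  by rewrite (eq_filter (fun c => eq_sym _ c)) filter_pred1_uniq ?gY // big_seq1.
rewrite (eq_bigr _ fiberE) exchange_big /=; apply: eq_bigr => c _.
rewrite -big_mkcondr mulr_natl -sumr_const.
by apply: eq_bigl => j; rewrite inE.
Qed.

Section CodedKMedian.
Variables (R : rcfType) (d n s k : nat) (p : 'I_n -> 'rV[R]_d).
Variables (A : 'M[R]_(s, n)) (delta : R) (Rs : {set 'I_s}) (b : 'I_s -> R).
Variables (Y : 'I_s -> k.-tuple 'rV[R]_d) (sigma : 'I_s -> 'I_n -> 'I_k).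
Hypothesis A01 : forall i j, A i j = 0 \/ A i j = 1.
Hypothesis b_recovers : recovery_vector A delta Rs b.

Definition recovered_cost (C : seq 'rV[R]_d) :=
  \sum_(i in Rs) b i * cost p (Pset A i) C.

Definition local_cost := \sum_(i in Rs) b i * cost p (Pset A i) (Y i).

Definition center i j := tnth (Y i) (sigma i j).

Definition projected_cost (C : seq 'rV[R]_d) :=
  \sum_(i in Rs) b i * \sum_(j in Pset A i) dist (center i j) C.

Definition coreset := undup (flatten [seq (Y i : seq _) | i <- enum Rs]).

Definition coreset_weight (c : 'rV[R]_d) :=
  \sum_(i in Rs | c \in (Y i : seq _))
    b i * #|[set j in Pset A i | center i j == c]|%:R.

Lemma cost_setT C : cost p [set: 'I_n] C = \sum_j dist (p j) C.
Proof. by apply: eq_bigl => j; rewrite in_setT. Qed.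

Lemma recovered_costE C :
  recovered_cost C = \sum_j (\sum_(i in Rs) b i * A i j) * dist (p j) C.
Proof.
rewrite /recovered_cost.
under eq_bigr => i _ do rewrite /cost (sum_Pset _ _ A01) mulr_sumr.
rewrite exchange_big; apply: eq_bigr => j _.
by rewrite mulr_suml; apply: eq_bigr => i _; rewrite mulrA.
Qed.

Lemma cost_le_recovered C : cost p [set: 'I_n] C <= recovered_cost C.
Proof.
rewrite cost_setT recovered_costE; apply: ler_sum => j _.
have /andP [a_ge1 _] := b_recovers.2 j.
by rewrite ler_peMl ?dist_ge0.
Qed.

Lemma recovered_le_cost C :
  recovered_cost C <= (1 + delta) * cost p [set: 'I_n] C.
Proof.
rewrite cost_setT recovered_costE mulr_sumr; apply: ler_sum => j _.
have /andP [_ a_le] := b_recovers.2 j.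
by rewrite ler_wpM2r ?dist_ge0.
Qed.

Hypothesis b_ge0 : forall i, i \in Rs -> 0 <= b i.
Hypothesis Y_opt : forall i, i \in Rs -> opt_kmedian p (Pset A i) (Y i).
Hypothesis sigma_closest : forall i j, i \in Rs -> j \in Pset A i ->
  enorm (p j - center i j) = dist (p j) (Y i).

Lemma local_le_recovered (C : k.-tuple 'rV[R]_d) :
  local_cost <= recovered_cost C.
Proof. by apply: ler_sum => i Rs_i; rewrite ler_wpM2l ?b_ge0 ?Y_opt. Qed.

Lemma recovered_le_projected C :
  recovered_cost C <= local_cost + projected_cost C.
Proof.
rewrite /recovered_cost /local_cost /projected_cost -big_split /=.
apply: ler_sum => i Rs_i; rewrite -mulrDr ler_wpM2l ?b_ge0 //.
rewrite /cost -big_split /=; apply: ler_sum => j Pj.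
by rewrite -sigma_closest // dist_lipschitz.
Qed.

Lemma projected_le_recovered C :
  projected_cost C <= local_cost + recovered_cost C.
Proof.
rewrite /recovered_cost /local_cost /projected_cost -big_split /=.
apply: ler_sum => i Rs_i; rewrite -mulrDr ler_wpM2l ?b_ge0 //.
rewrite /cost -big_split /=; apply: ler_sum => j Pj.
by rewrite -sigma_closest // enormB dist_lipschitz.
Qed.

Lemma coreset_weightE c :
  coreset_weight c =
    \sum_(i in Rs) b i * #|[set j in Pset A i | center i j == c]|%:R.
Proof.
rewrite /coreset_weight big_mkcondr; apply: eq_bigr => i _.
case: ifPn => // c_notin_Yi.
suff -> : [set j in Pset A i | center i j == c] = set0 by rewrite cards0 mulr0.
apply/setP => j; rewrite !inE; apply/negbTE/nandP; right.
by apply: contraNneq c_notin_Yi => <-; apply: mem_tnth.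
Qed.

Lemma wcost_coreset C : wcost coreset coreset_weight C = projected_cost C.
Proof.
rewrite /wcost; under eq_bigr => c _ do rewrite coreset_weightE mulr_suml.
rewrite exchange_big; apply: eq_bigr => i Rs_i.
under eq_bigr => c _ do rewrite -mulrA.
rewrite -mulr_sumr sum_fibers ?undup_uniq // => j _.
by rewrite mem_undup; apply/flatten_mapP; exists i; rewrite ?mem_enum ?mem_tnth.
Qed.

End CodedKMedian.

Theorem theorem2 (R : rcfType) (d n s t k : nat) (p : 'I_n -> 'rV[R]_d)
  (delta : R) (A : 'M[R]_(s, n)) (Rs : {set 'I_s}) (b : 'I_s -> R)
  (Y : 'I_s -> k.-tuple 'rV[R]_d) (sigma : 'I_s -> 'I_n -> 'I_k)
  (Chat Cstar : k.-tuple 'rV[R]_d) :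
  injective p ->
  (0 < k)%N ->
  (t < s)%N ->
  0 < delta ->
  (forall i j, A i j = 0 \/ A i j = 1) ->
  straggler_resilient t A delta ->
  (s - t <= #|Rs|)%N ->
  recovery_vector A delta Rs b ->
  (* Y_i is an optimal set of k k-median centers for P_i *)
  (forall i, i \in Rs -> opt_kmedian p (Pset A i) (Y i)) ->
  (* sigma i assigns each point of P_i to a closest center of Y_i (ties arbitrary) *)
  (forall i j, i \in Rs -> j \in Pset A i ->
     enorm (p j - tnth (Y i) (sigma i j)) = dist (p j) (Y i)) ->
  let w_i := fun i (c : 'rV[R]_d) =>
    (#|[set j in Pset A i | tnth (Y i) (sigma i j) == c]|)%:R : R in
  let Yall := undup (flatten [seq (Y i : seq _) | i <- enum Rs]) in
  let w := fun c => \sum_(i in Rs | c \in (Y i : seq _)) b i * w_i i c in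
  opt_wkmedian Yall w Chat ->
  opt_kmedian p [set: 'I_n] Cstar ->
  cost p [set: 'I_n] Chat <= 3%:R * (1 + delta) * cost p [set: 'I_n] Cstar.
Proof.
move=> _ _ _ _ A01 _ _ b_recovers Y_opt sigma_closest w_i Yall w Chat_opt _.
have b_ge0 := b_recovers.1.
have projected_opt : projected_cost A Rs b Y sigma Chat <=
                     projected_cost A Rs b Y sigma Cstar.
  by rewrite -!wcost_coreset; apply: Chat_opt.
have := cost_le_recovered p A01 b_recovers Chat.
have := recovered_le_projected b_ge0 sigma_closest Chat.
have := projected_le_recovered b_ge0 sigma_closest Cstar.
have := local_le_recovered b_ge0 Y_opt Cstar.
have := recovered_le_cost p A01 b_recovers Cstar.
lra.
Qed.
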